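(* Let $r\ge 1$ and $m\ge r$ be integers, and put $d_k(m,r)=\det\left(\binom{k+i+j}{m}\right)_{i,j=0}^{r-1}$ for $k\ge 0$. Then, as formal power series in $x$, $$(1-x)^{r(m-r+1)+1}\sum_{k\ge 0} d_k(m,r)\,x^k=(-1)^{\binom r2}\,x^{m-r+1}A_{m,r}(x),$$ where $A_{m,r}(x)=\sum_{j} N(r,m-r+1,j)\,x^j$ is a polynomial in $x$ of degree at most $(r-1)(m-r)$.
   Context: For an integer $x$ and integer $r>0$ the rising factorial is $x^{(r)}=x(x+1)\cdots(x+r-1)$, with $x^{(0)}=1$. For a positive integer $r$ and integers $n,k$ the $r$-Hoggatt binomial is defined by $\left\langle \begin{smallmatrix} n\\ k\end{smallmatrix}\right\rangle_r=\prod_{j=1}^{k}\frac{(n-k+j)^{(r)}}{(j)^{(r)}}$ for $0\le k\le n$ (empty product $=1$), and $0$ otherwise. For integers $r\ge1$, $s\ge 1$, the $r$-dimensional Narayana numbers $N(r,s,j)$ ($j\ge 0$) are the coefficients in $$(1-x)^{rs+1}\sum_{k\ge0}\left\langle \begin{matrix} k+s\\ s\end{matrix}\right\rangle_r x^k=\sum_{j\ge 0}N(r,s,j)\,x^j ,$$ and the left-hand side is a polynomial in $x$ of degree at most $(r-1)(s-1)$. *)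

From mathcomp Require Import all_boot all_order all_algebra.
Set Implicit Arguments. Unset Strict Implicit. Unset Printing Implicit Defensive.
Import GRing.Theory Num.Theory.
Local Open Scope ring_scope.

Definition rising (x r : nat) : rat := \prod_(i < r) (x + i)%:R.

Definition hoggatt (r n k : nat) : rat :=
  if (k <= n)%N then \prod_(1 <= j < k.+1) (rising (n - k + j) r / rising j r)
  else 0.

(* Coefficient of x^n in the product of two formal power series given by
   their coefficient sequences. *)
Definition ps_mul_coef (a b : nat -> rat) (n : nat) : rat :=
  \sum_(i < n.+1) a i * b (n - i)%N.

(* Coefficients of the polynomial (1 - x)^e. *)
Definition one_minus_x_pow (e : nat) (i : nat) : rat := (-1) ^+ i * ('C(e, i))%:R.

(* r-dimensional Narayana numbers N(r,s,j): coefficient of x^j in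
   (1-x)^(rs+1) * sum_k <k+s, s>_r x^k. *)
Definition narayana (r s j : nat) : rat :=
  ps_mul_coef (one_minus_x_pow (r * s + 1)) (fun k => hoggatt r (k + s) s) j.

Definition dk (m r k : nat) : rat :=
  \det (\matrix_(i < r, j < r) ('C(k + i + j, m))%:R).

From mathcomp Require Import all_boot all_order all_algebra.
From mathcomp Require Import zify ring.
Import GRing.Theory Num.Theory.
Local Open Scope ring_scope.
Set Implicit Arguments. Unset Strict Implicit. Unset Printing Implicit Defensive.

(* Put s = m - r + 1.  By Vandermonde's convolution the matrix (C(k+i+j, m))
   factors as (C(k+i, s+t)) times the anti-identity times a unitriangular
   binomial matrix, and scaling column t of (C(k+i, s+t)) by C(s+t, s) yields
   diag(C(k+i, s)) times the unitriangular matrix (C(k-s+i, t)).  Hence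
   d_k(m,r) = (-1)^C(r,2) <k, s>_r, which vanishes for k < s, and the series
   identity is a shift of the defining series of the Narayana numbers.
   For the degree bound, k |-> <k+s, s>_r is the polynomial
   G(k) = prod_(i<s, j<r) (1 + k/(i+1+j)) of degree rs, so its backward
   difference of order rs+1 vanishes; N(r,s,j) is that difference at j minus
   the terms with G(j-i), i > j, and these vanish because G has the roots
   -1, ..., -(r+s-1). *)

Lemma sum_ord_widen (R : nmodType) a b (F : nat -> R) : (a <= b)%N ->
  (forall u, (a <= u < b)%N -> F u = 0) ->
  \sum_(u < a) F u = \sum_(u < b) F u.
Proof.
move=> ab F0; rewrite (big_ord_widen _ _ ab) big_mkcond; apply: eq_bigr => u _.
by case: ifP => // /negbT; rewrite -leqNgt => au; rewrite F0 // au ltn_ord.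
Qed.

Lemma ffactD n s t : (n ^_ (s + t) = n ^_ s * (n - s) ^_ t)%N.
Proof.
rewrite !ffact_prod big_split_ord /=; congr (_ * _)%N.
by apply: eq_bigr => i _; rewrite subnDA.
Qed.

Lemma bin_trinomial n s t :
  ('C(n, s + t) * 'C(s + t, s) = 'C(n, s) * 'C(n - s, t))%N.
Proof.
have fact_gt0 : (0 < s`! * t`!)%N by rewrite muln_gt0 !fact_gt0.
apply/eqP; rewrite -(eqn_pmul2r fact_gt0); apply/eqP.
have binD_fact : ('C(s + t, s) * (s`! * t`!) = (s + t)`!)%N.
  by have := bin_fact (leq_addr t s); rewrite addKn.
rewrite -mulnA binD_fact bin_ffact ffactD -!bin_ffact; ring.
Qed.

Lemma prod_shift_bin a s :
  (\prod_(1 <= j < s.+1) (a + j) = 'C(a + s, s) * s`!)%N.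
Proof.
elim: s => [|s IH]; first by rewrite big_geq // bin0.
rewrite big_nat_recr //= IH factS addnS.
have /= := mul_bin_diag (a + s).+1 s; nia.
Qed.

Lemma prod_rising z r s :
  \prod_(1 <= j < s.+1) rising (z + j) r = \prod_(i < r) ('C(z + i + s, s) * s`!)%:R.
Proof.
rewrite /rising exchange_big /=; apply: eq_bigr => i _.
rewrite -prod_shift_bin natr_prod; apply: eq_big_nat => j _; congr (_%:R); lia.
Qed.

Lemma hoggattE r n k : (k <= n)%N ->
  hoggatt r n k = \prod_(i < r) ('C(n + i, k)%:R / 'C(k + i, k)%:R).
Proof.
move=> kn; rewrite /hoggatt kn prodf_div prod_rising.
rewrite (eq_big_nat _ _ (F2 := fun j => rising (0 + j) r)) // prod_rising -prodf_div.
apply: eq_bigr => i _; rewrite (_ : n - k + i + k = n + i)%N; last by lia.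
have fact_neq0 : k`!%:R != 0 :> rat by rewrite pnatr_eq0 -lt0n fact_gt0.
have bin_neq0 : 'C(k + i, k)%:R != 0 :> rat by rewrite pnatr_eq0 -lt0n bin_gt0 leq_addr.
by rewrite add0n (addnC i k) !natrM; field; rewrite fact_neq0 bin_neq0.
Qed.

Definition rev_mx (R : nzRingType) n : 'M[R]_n :=
  \matrix_(i < n, j < n) ((i + j == n.-1)%N%:R).

Lemma det_rev_mx (R : comNzRingType) n : \det (rev_mx R n) = (-1) ^+ 'C(n, 2).
Proof.
elim: n => [|n IH]; first by rewrite det_mx00.
rewrite (expand_det_row _ ord0) (bigD1 ord_max) //= big1 ?addr0; last first.
  move=> j /negbTE jn; rewrite !mxE add0n.
  have -> : (j == n :> nat) = false by rewrite -jn; apply/eqP/eqP => [h|->//]; apply/val_inj.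
  by rewrite mul0r.
rewrite !mxE add0n eqxx mul1r /cofactor add0n.
have -> : row' ord0 (col' ord_max (rev_mx R n.+1)) = rev_mx R n.
  apply/matrixP => i j; rewrite !mxE lift0 lift_max /=.
  by case: n {IH} i j => [[]//|n] i j /=; rewrite addSn.
by rewrite IH -exprD binS bin1 addnC.
Qed.

Lemma det_bin_shift (R : comNzRingType) n z :
  \det (\matrix_(i < n, t < n) ('C(z + i, t))%:R : 'M[R]_n) = 1.
Proof.
pose L : 'M[R]_n := \matrix_(i, u) ('C(i, u))%:R.
pose U : 'M[R]_n := \matrix_(u, t) ((u <= t)%N * 'C(z, t - u))%:R.
have -> : \matrix_(i, t) ('C(z + i, t))%:R = L *m U.
  apply/matrixP => i t; rewrite !mxE (addnC z) -binomial.Vandermonde natr_sum.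
  rewrite (eq_bigr (fun u : 'I_t.+1 => ('C(i, u) * ((u <= t)%N * 'C(z, t - u)))%:R)); last first.
    by move=> u _; rewrite -ltnS ltn_ord mul1n.
  rewrite (@sum_ord_widen _ t.+1 n (fun u => ('C(i, u) * ((u <= t)%N * 'C(z, t - u)))%:R)) //.
  - by apply: eq_bigr => u _; rewrite !mxE -natrM.
  - by move=> u /andP[tu _]; rewrite leqNgt tu mul0n muln0.
rewrite det_mulmx det_trig; last by apply/is_trig_mxP => i j ij; rewrite !mxE bin_small.
rewrite -det_tr det_trig; last first.
  by apply/is_trig_mxP => i j ij; rewrite !mxE leqNgt ij mul0n.
by rewrite !big1 ?mulr1 // => i _; rewrite !mxE ?leqnn ?subnn ?bin0 ?binn.
Qed.

Lemma det_bin_hoggatt r k s : (0 < r)%N ->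
  \det (\matrix_(i < r, t < r) ('C(k + i, s + t))%:R : 'M[rat]_r) = hoggatt r k s.
Proof.
move=> r_gt0; case: (leqP s k) => sk; last first.
  rewrite /hoggatt leqNgt sk.
  case: r r_gt0 => // r _; rewrite (expand_det_row _ ord0) big1 // => j _.
  by rewrite !mxE addn0 bin_small ?mul0r //; lia.
rewrite hoggattE //.
pose c : 'rV[rat]_r := \row_t ('C(s + t, s))%:R.
pose a : 'rV[rat]_r := \row_i ('C(k + i, s))%:R.
have col_scaling : \matrix_(i < r, t < r) ('C(k + i, s + t))%:R *m diag_mx c =
    diag_mx a *m \matrix_(i < r, t < r) ('C(k - s + i, t))%:R.
  rewrite mul_diag_mx mul_mx_diag; apply/matrixP => i t.
  by rewrite !mxE -!natrM bin_trinomial (_ : k + i - s = k - s + i)%N //; lia.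
have c_neq0 : \prod_i c 0 i != 0.
  rewrite prodf_seq_neq0; apply/allP => i _; rewrite mxE pnatr_eq0 -lt0n bin_gt0.
  exact: leq_addr.
move/(congr1 determinant): col_scaling.
rewrite !det_mulmx !det_diag det_bin_shift mulr1 => /(canRL (mulfK c_neq0)) ->.
by rewrite prodf_div; congr (_ / _); apply: eq_bigr => i _; rewrite mxE addnC.
Qed.

Lemma dk_hoggatt m r k : (0 < r)%N -> (r <= m)%N ->
  dk m r k = (-1) ^+ 'C(r, 2) * hoggatt r k (m - r + 1).
Proof.
move=> r_gt0 rm.
pose A := \matrix_(i < r, t < r) ('C(k + i, (m - r + 1) + t))%:R : 'M[rat]_r.
pose U := (\matrix_(i < r, t < r) ('C(0 + i, t))%:R : 'M[rat]_r)^T.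
have A_rev : A *m rev_mx rat r = \matrix_(i, u) ('C(k + i, m - u))%:R.
  apply/matrixP => i u; rewrite !mxE (bigD1 (rev_ord u)) //= big1 ?addr0.
    rewrite !mxE /= (_ : r - u.+1 + u == r.-1)%N ?mulr1; last first.
      by apply/eqP; have := ltn_ord u; lia.
    by congr (_%:R); congr 'C(_, _); have := ltn_ord u; lia.
  move=> v vu; rewrite !mxE (_ : (v + u == r.-1)%N = false) ?mulr0 //.
  by apply/negbTE; apply: contra vu => /eqP vuE; apply/eqP/val_inj => /=; lia.
have dk_factor : \matrix_(i < r, j < r) ('C(k + i + j, m))%:R = A *m rev_mx rat r *m U.
  rewrite A_rev; apply/matrixP => i j; rewrite !mxE addnC -binomial.Vandermonde natr_sum.
  rewrite -(@sum_ord_widen _ r m.+1 (fun u => ('C(j, u) * 'C(k + i, m - u))%:R)) ?(leqW rm) //.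
  - by apply: eq_bigr => u _; rewrite !mxE -natrM mulnC.
  - by move=> u /andP[ru _]; rewrite bin_small ?mul0n //; apply: leq_trans (ltn_ord j) ru.
rewrite /dk dk_factor !det_mulmx det_rev_mx det_tr det_bin_shift mulr1 mulrC.
by rewrite det_bin_hoggatt.
Qed.

Lemma ps_mul_coef_shiftr a b s n : (forall k, (k < s)%N -> b k = 0) ->
  ps_mul_coef a b n =
  if (s <= n)%N then ps_mul_coef a (fun k => b (k + s)%N) (n - s) else 0.
Proof.
move=> b0; rewrite /ps_mul_coef; case: leqP => sn; last first.
  by rewrite big1 // => i _; rewrite b0 ?mulr0 //; apply: leq_ltn_trans (leq_subr _ _) sn.
rewrite -(@sum_ord_widen _ (n - s).+1 n.+1 (fun i => a i * b (n - i)%N)); last 2 first.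
- by rewrite ltnS leq_subr.
- by move=> u /andP[su un]; rewrite b0 ?mulr0 //; lia.
apply: eq_bigr => i _; congr (_ * b _); have := ltn_ord i; lia.
Qed.

Lemma ps_mul_coef_dk r m n : (0 < r)%N -> (r <= m)%N ->
  ps_mul_coef (one_minus_x_pow (r * (m - r + 1) + 1)) (dk m r) n =
  (-1) ^+ 'C(r, 2) *
    (if (m - r + 1 <= n)%N then narayana r (m - r + 1) (n - (m - r + 1)) else 0).
Proof.
move=> r_gt0 rm; set s := (m - r + 1)%N.
have hoggatt_lt k : (k < s)%N -> hoggatt r k s = 0 by rewrite /hoggatt ltnNge => /negbTE ->.
rewrite {1}/ps_mul_coef; under eq_bigr => i _ do rewrite dk_hoggatt // mulrCA.
by rewrite -mulr_sumr -/(ps_mul_coef _ (hoggatt r ^~ s) n) (ps_mul_coef_shiftr _ _ hoggatt_lt).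
Qed.

Section BackwardDifference.

Variable R : comNzRingType.
Implicit Types (g h : R -> R) (a b x : R).

Definition backward_diff n g x : R :=
  \sum_(i < n.+1) (-1) ^+ i * ('C(n, i))%:R * g (x - i%:R).

Lemma eq_backward_diff n g h x : g =1 h -> backward_diff n g x = backward_diff n h x.
Proof. by move=> gh; apply: eq_bigr => i _; rewrite gh. Qed.

Lemma backward_diff_lincomb n a b g h x :
  backward_diff n (fun y => a * g y + b * h y) x =
  a * backward_diff n g x + b * backward_diff n h x.
Proof. by rewrite /backward_diff !mulr_sumr -big_split; apply: eq_bigr => i _ /=; ring. Qed.

Lemma backward_diff_shift n g x :
  backward_diff n (fun y => g (y - 1)) x = backward_diff n g (x - 1).
Proof. by apply: eq_bigr => i _; rewrite addrAC. Qed.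

Lemma backward_diff0 g x : backward_diff 0 g x = g x.
Proof. by rewrite /backward_diff big_ord1 expr0 bin0 !mul1r subr0. Qed.

Lemma backward_diffS n g x :
  backward_diff n.+1 g x = backward_diff n (fun y => g y - g (y - 1)) x.
Proof.
pose A := \sum_(i < n.+2) (-1) ^+ i * ('C(n, i))%:R * g (x - i%:R).
pose B := \sum_(i < n.+1) (-1) ^+ i * ('C(n, i))%:R * g (x - i%:R - 1).
have A_trunc : A = \sum_(i < n.+1) (-1) ^+ i * ('C(n, i))%:R * g (x - i%:R).
  by rewrite /A big_ord_recr /= bin_small // mulr0 mul0r addr0.
have A_shift : A = g x + \sum_(i < n.+1) (-1) ^+ i.+1 * ('C(n, i.+1))%:R * g (x - i%:R - 1).
  rewrite /A big_ord_recl /= expr0 bin0 !mul1r subr0; congr (_ + _).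
  by apply: eq_bigr => i _; rewrite /bump leq0n add1n -addn1 natrD opprD addrA.
have -> : backward_diff n.+1 g x = A - B.
  rewrite A_shift /backward_diff big_ord_recl /= expr0 bin0 !mul1r subr0 -addrA.
  congr (_ + _); rewrite /B -sumrB; apply: eq_bigr => i _ /=.
  rewrite /bump leq0n add1n binS natrD exprS -[(i.+1)%:R]natr1 opprD addrA; ring.
by rewrite A_trunc /B /backward_diff -sumrB; apply: eq_bigr => i _; ring.
Qed.

Lemma backward_diff_mul_linear n g a b :
  (forall x, backward_diff n g x = 0) ->
  forall x, backward_diff n.+1 (fun y => g y * (a * y + b)) x = 0.
Proof.
elim: n g => [|n IH] g g0 x.
  have {}g0 y : g y = 0 by rewrite -(g0 y) backward_diff0.
  by rewrite /backward_diff big1 // => i _; rewrite g0 mul0r mulr0.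
have leibniz y : g y * (a * y + b) - g (y - 1) * (a * (y - 1) + b) =
    1 * ((g y - g (y - 1)) * (a * y + b)) + a * g (y - 1) by ring.
rewrite backward_diffS (eq_backward_diff _ _ leibniz) backward_diff_lincomb.
rewrite backward_diff_shift g0 mulr0 addr0 IH ?mulr0 // => y.
by rewrite -backward_diffS.
Qed.

Lemma backward_diff_prod_linear (T : Type) (s : seq T) (a b : T -> R) x :
  backward_diff (size s).+1 (fun y => \prod_(t <- s) (a t * y + b t)) x = 0.
Proof.
elim: s x => [|t s IH] x /=.
  rewrite /backward_diff !big_ord_recl big_ord0 !big_nil /=; ring.
rewrite (eq_backward_diff _ (h := fun y => (\prod_(t <- s) (a t * y + b t)) * (a t * y + b t))).
  exact: backward_diff_mul_linear.
by move=> y; rewrite big_cons mulrC.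
Qed.

End BackwardDifference.

Definition hoggatt_poly s r (y : rat) : rat :=
  \prod_(p : 'I_s * 'I_r) ((p.1.+1 + p.2)%N%:R^-1 * y + 1).

Lemma hoggatt_polyE r s k : hoggatt r (k + s) s = hoggatt_poly s r k%:R.
Proof.
rewrite /hoggatt leq_addl addnK big_add1 /= big_mkord /hoggatt_poly.
rewrite -(pair_bigA _ (fun (i : 'I_s) (j : 'I_r) => (i.+1 + j)%N%:R^-1 * k%:R + 1)) /=.
apply: eq_bigr => j _; rewrite /rising -prodf_div; apply: eq_bigr => i _.
have ji_neq0 : (j.+1 + i)%N%:R != 0 :> rat by rewrite pnatr_eq0.
have ji_eq : (j.+1 + i)%N%:R = 1 + j%:R + i%:R :> rat by rewrite natrD -natr1; ring.
by rewrite -(addnA k) natrD; field; rewrite -ji_eq.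
Qed.

Lemma backward_diff_hoggatt_poly s r x :
  backward_diff (s * r).+1 (hoggatt_poly s r) x = 0.
Proof.
pose a (p : 'I_s * 'I_r) := (p.1.+1 + p.2)%N%:R^-1 : rat.
have prod_enum y : hoggatt_poly s r y = \prod_(p <- enum {: 'I_s * 'I_r}) (a p * y + 1).
  by rewrite big_enum.
have -> : (s * r = size (enum {: 'I_s * 'I_r}))%N by rewrite -cardT card_prod !card_ord.
by rewrite (eq_backward_diff _ _ prod_enum) backward_diff_prod_linear.
Qed.

Lemma hoggatt_poly_root s r n : (0 < s)%N -> (0 < r)%N -> (0 < n < r + s)%N ->
  hoggatt_poly s r (- n%:R) = 0.
Proof.
move=> s_gt0 r_gt0 /andP[n_gt0 n_lt].
have i_lt : (minn n s - 1 < s)%N by lia.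
have j_lt : (n - minn n s < r)%N by lia.
rewrite /hoggatt_poly (bigD1 (Ordinal i_lt, Ordinal j_lt)) //= mulrC.
rewrite (_ : (minn n s - 1).+1 + (n - minn n s) = n)%N; last by lia.
have n_neq0 : n%:R != 0 :> rat by rewrite pnatr_eq0 -lt0n.
by rewrite mulrN mulVf // addrC subrr mulr0.
Qed.

Lemma narayana_eq0 r s j : (0 < r)%N -> (0 < s)%N -> ((r - 1) * (s - 1) < j)%N ->
  narayana r s j = 0.
Proof.
move=> r_gt0 s_gt0 j_gt.
have rs_le : (r * s <= (r - 1) * (s - 1) + r + s - 1)%N.
  by case: r r_gt0 {j_gt} => // r' _; case: s s_gt0 => // s' _; nia.
set E := (r * s + 1)%N.
pose H i := (-1) ^+ i * ('C(E, i))%:R * hoggatt_poly s r (j%:R - i%:R).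
have narayana_sum : narayana r s j = \sum_(i < j.+1) H i.
  apply: eq_bigr => i _; rewrite /one_minus_x_pow /H hoggatt_polyE natrB //.
  by have := ltn_ord i; lia.
have diff_eq0 : \sum_(i < E.+1) H i = 0.
  rewrite -[LHS]/(backward_diff E (hoggatt_poly s r) j%:R).
  by rewrite /E addn1 mulnC backward_diff_hoggatt_poly.
have H_bin0 u : (E < u)%N -> H u = 0 by move=> Eu; rewrite /H bin_small // mulr0 mul0r.
rewrite narayana_sum (@sum_ord_widen _ j.+1 (j + E).+1 H) ?ltnS ?leq_addr //; last first.
  move=> u /andP[ju uE]; have [Eu|uE'] := ltnP E u; first exact: H_bin0.
  by rewrite /H -opprB -natrB ?hoggatt_poly_root ?mulr0 //; lia.
rewrite -(@sum_ord_widen _ E.+1 (j + E).+1 H) ?ltnS ?leq_addl //.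
by move=> u /andP[Eu _]; exact: H_bin0.
Qed.

Theorem theorem2 (r m : nat) (hr : (1 <= r)%N) (hm : (r <= m)%N) :
  (forall n : nat,
     ps_mul_coef (one_minus_x_pow (r * (m - r + 1) + 1)) (dk m r) n =
     (-1) ^+ 'C(r, 2) *
       (if (m - r + 1 <= n)%N then narayana r (m - r + 1) (n - (m - r + 1)) else 0))
  /\ (forall j : nat, ((r - 1) * (m - r) < j)%N -> narayana r (m - r + 1) j = 0).
Proof.
split=> [n | j j_gt]; first exact: ps_mul_coef_dk.
apply: narayana_eq0 => //; first by rewrite addn1.
by rewrite addnK.
Qed.
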